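(* Let $k$ be a field of characteristic zero. The variety $S_I\subset\mathrm{SL}(2)\times_k\mathrm{SL}(2)$ of commuting pairs, defined by $XYX^{-1}Y^{-1}=I$, is $k$-rational of dimension $4$. *)

From HB Require Import structures.
From mathcomp Require Import all_boot all_order all_algebra.
From mathcomp Require Import fraction.
From mathcomp Require Import mpoly.

Set Implicit Arguments.
Unset Strict Implicit.
Unset Printing Implicit Defensive.

Import GRing.Theory.
Local Open Scope ring_scope.

Definition in_ideal (R : comNzRingType) (n m : nat)
  (gens : 'I_m -> {mpoly R[n]}) (p : {mpoly R[n]}) : Prop :=
  exists cs : 'I_m -> {mpoly R[n]}, p = \sum_(i < m) cs i * gens i.

Definition in_radical (R : comNzRingType) (n m : nat)
  (gens : 'I_m -> {mpoly R[n]}) (p : {mpoly R[n]}) : Prop :=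
  exists e : nat, in_ideal gens (p ^+ e).

Definition ratfun (k : fieldType) (d : nat) := {fraction {mpoly k[d]}}.

Definition ev_ratfun (k : fieldType) (n d : nat) (h : 'I_n -> ratfun k d)
  (p : {mpoly k[n]}) : ratfun k d :=
  mmap (fun c : k => FracField.tofrac (c%:MP : {mpoly k[d]})) h p.

(* The affine variety V = V(gens) in A^n_k (with its reduced structure, i.e.
   coordinate ring k[x]/rad(gens)) is k-rational of dimension d: it is
   integral and its function field Frac(k[x]/rad(gens)) is k-isomorphic to the
   purely transcendental field k(t_0,...,t_{d-1}).
   Concretely: there is a k-algebra map k[x] -> k(t) (x_i |-> h i) whose
   kernel is exactly rad(gens) (so k[x]/rad(gens) is a domain embedding into
   k(t)), and whose induced field map Frac(k[x]/rad(gens)) -> k(t) is onto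
   (every generator t_j is a quotient of images). *)
Definition k_rational_of_dim (k : fieldType) (n m : nat)
  (gens : 'I_m -> {mpoly k[n]}) (d : nat) : Prop :=
  exists h : 'I_n -> ratfun k d,
    (forall p : {mpoly k[n]}, ev_ratfun h p = 0 <-> in_radical gens p) /\
    (forall j : 'I_d, exists a b : {mpoly k[n]},
        ev_ratfun h b != 0 /\
        FracField.tofrac ('X_j : {mpoly k[d]}) = ev_ratfun h a / ev_ratfun h b).

(* Coordinates on A^8 = M_2 x M_2:
   X = [[x0, x1], [x2, x3]],  Y = [[x4, x5], [x6, x7]]. *)
Definition matX (k : fieldType) : 'M[{mpoly k[8]}]_2 :=
  \matrix_(i < 2, j < 2) 'X_(inord (2 * i + j)).
Definition matY (k : fieldType) : 'M[{mpoly k[8]}]_2 :=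
  \matrix_(i < 2, j < 2) 'X_(inord (4 + 2 * i + j)).

(* Defining equations of S_I inside SL(2) x SL(2):
   det X = 1, det Y = 1, and X Y X^{-1} Y^{-1} = I, where on SL(2) the
   inverse of a matrix is its adjugate. *)
Definition SI_eqs (k : fieldType) : 'I_6 -> {mpoly k[8]} :=
  fun i =>
    match val i with
    | 0 => \det (matX k) - 1
    | 1 => \det (matY k) - 1
    | 2 => (matX k *m matY k *m \adj (matX k) *m \adj (matY k) - 1%:M) 0 0
    | 3 => (matX k *m matY k *m \adj (matX k) *m \adj (matY k) - 1%:M) 0 1
    | 4 => (matX k *m matY k *m \adj (matX k) *m \adj (matY k) - 1%:M) 1 0
    | _ => (matX k *m matY k *m \adj (matX k) *m \adj (matY k) - 1%:M) 1 1
    end.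

From HB Require Import structures.
From mathcomp Require Import all_boot all_order all_algebra.
From mathcomp Require Import fraction mpoly ring.

(* Writing X = [[t0, t1], [x2, x3]] and Y = a X + b with a = t3 / t1, b = t2 / t1
   parametrizes S_I by k(t0, t1, t2, t3), and t0, t1, t2, t3 are recovered as x0, x1,
   x1 y0 - y1 x0 and y1.  The defining ideal is also generated by det X - 1,
   det Y - 1 and the entries of XY - YX (adjugate identities), and its radical is the
   kernel of the parametrization.  Over x1 != 0 the coordinate ring is generated by
   x0, x1, tr X, x1 y0 - y1 x0 and y1 subject to the single relation det Y = 1, which
   is linear in tr X with a coefficient coprime to it, so there the kernel lies in the
   saturated ideal.  Transposition, swapping X and Y, and conjugation give five more
   such charts, which miss only the four pairs of scalar matrices (+-1, +-1).  A
   polynomial in the kernel vanishes there too (they are limits of points of the first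
   chart), so as 2 != 0 it lies in the ideal generated by the six chart functions, and
   peeling off the charts one at a time puts a power of it in the defining ideal. *)

Set Implicit Arguments.
Unset Strict Implicit.
Unset Printing Implicit Defensive.

Import GRing.Theory.
Local Open Scope ring_scope.

(** * Ideals of polynomial rings *)

Section Ideals.
Variables (R : comNzRingType) (n m : nat) (gens : 'I_m -> {mpoly R[n]}).
Implicit Types p q : {mpoly R[n]}.

Lemma in_ideal0 : in_ideal gens 0.
Proof. by exists (fun=> 0); rewrite big1 // => i _; rewrite mul0r. Qed.

Lemma in_idealD p q : in_ideal gens p -> in_ideal gens q -> in_ideal gens (p + q).
Proof.
move=> [a ->] [b ->]; exists (fun i => a i + b i).
by rewrite -big_split /=; apply: eq_bigr => i _; rewrite mulrDl.
Qed.

Lemma in_idealMl c p : in_ideal gens p -> in_ideal gens (c * p).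
Proof.
move=> [a ->]; exists (fun i => c * a i).
by rewrite mulr_sumr; apply: eq_bigr => i _; rewrite mulrA.
Qed.

Lemma in_idealMr c p : in_ideal gens p -> in_ideal gens (p * c).
Proof. by rewrite mulrC; apply: in_idealMl. Qed.

Lemma in_idealB p q : in_ideal gens p -> in_ideal gens q -> in_ideal gens (p - q).
Proof. by move=> hp /(in_idealMl (-1)); rewrite mulN1r; apply: in_idealD. Qed.

Lemma in_ideal_gen i : in_ideal gens (gens i).
Proof.
exists (fun j => (j == i)%:R); rewrite (bigD1 i) //= eqxx mul1r big1 ?addr0 //.
by move=> j /negbTE ->; rewrite mul0r.
Qed.

Lemma in_ideal_stable (f : {rmorphism {mpoly R[n]} -> {mpoly R[n]}}) p :
  (forall i, in_ideal gens (f (gens i))) -> in_ideal gens p -> in_ideal gens (f p).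
Proof.
move=> fgens [a ->]; rewrite rmorph_sum; apply: (big_ind (in_ideal gens)).
- exact: in_ideal0.
- exact: in_idealD.
- by move=> i _; rewrite rmorphM; apply: in_idealMl.
Qed.

Lemma rmorph_in_ideal_eq0 (S : nzRingType) (f : {rmorphism {mpoly R[n]} -> S}) p :
  (forall i, f (gens i) = 0) -> in_ideal gens p -> f p = 0.
Proof.
by move=> fgens [a ->]; rewrite rmorph_sum big1 // => i _; rewrite rmorphM fgens mulr0.
Qed.

Lemma rmorph_in_radical_eq0 (S : idomainType) (f : {rmorphism {mpoly R[n]} -> S}) p :
  (forall i, f (gens i) = 0) -> in_radical gens p -> f p = 0.
Proof.
move=> fgens [e /(rmorph_in_ideal_eq0 fgens)/eqP].
by rewrite rmorphXn expf_eq0 => /andP[_ /eqP].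
Qed.

End Ideals.

Lemma in_ideal_sub (R : comNzRingType) (n m1 m2 : nat)
    (gens1 : 'I_m1 -> {mpoly R[n]}) (gens2 : 'I_m2 -> {mpoly R[n]}) p :
  (forall i, in_ideal gens2 (gens1 i)) -> in_ideal gens1 p -> in_ideal gens2 p.
Proof.
move=> sub12 [a ->]; apply: (big_ind (in_ideal gens2)).
- exact: in_ideal0.
- exact: in_idealD.
- by move=> i _; apply: in_idealMl.
Qed.

Lemma in_ideal1 (R : comNzRingType) (n : nat) (g p : {mpoly R[n]}) :
  in_ideal (fun _ : 'I_1 => g) p <-> exists c, p = c * g.
Proof.
split=> [[a ->]|[c ->]]; first by exists (a ord0); rewrite big_ord1.
by exists (fun=> c); rewrite big_ord1.
Qed.

Lemma mpoly_ring_ind (R : comNzRingType) (n : nat) (P : {mpoly R[n]} -> Prop) :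
    (forall c, P c%:MP) -> (forall i, P 'X_i) ->
    (forall p q, P p -> P q -> P (p + q)) -> (forall p q, P p -> P q -> P (p * q)) ->
  forall p, P p.
Proof.
move=> PC PX PD PM p; elim/mpolyind: p => [|c m p _ _ Pp].
  by rewrite -mpolyC0; apply: PC.
apply: (PD) => //; rewrite -mul_mpolyC; apply: (PM) => //.
rewrite mpolyXE_id; apply: (big_ind P) => [|x y|i _]; first by rewrite -mpolyC1.
  exact: (PM).
elim: (m i) => [|e IHe]; first by rewrite expr0 -mpolyC1.
by rewrite exprS; apply: (PM).
Qed.

Lemma comp_mpolyX_inord (R : comNzRingType) (n n' j : nat) (lq : n.+1.-tuple {mpoly R[n']}) :
  (j <= n)%N -> 'X_(inord j) \mPo lq = lq`_j.
Proof. by move=> le_jn; rewrite comp_mpolyXU inordK. Qed.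

Lemma mpoly_rmorph_ext (R : comNzRingType) (n : nat) (S : nzRingType)
    (f g : {rmorphism {mpoly R[n]} -> S}) :
  (forall c, f c%:MP = g c%:MP) -> (forall i, f 'X_i = g 'X_i) -> f =1 g.
Proof.
move=> eqC eqX; elim/mpoly_ring_ind => [c|i|p q eq_p eq_q|p q eq_p eq_q] //.
- by rewrite !rmorphD eq_p eq_q.
- by rewrite !rmorphM eq_p eq_q.
Qed.

Lemma comp_mpolyK (R : comNzRingType) (n : nat) (lq lq' : n.-tuple {mpoly R[n]}) :
  (forall i, ('X_i \mPo lq) \mPo lq' = 'X_i) -> forall p, (p \mPo lq) \mPo lq' = p.
Proof.
move=> lqK; apply: (@mpoly_rmorph_ext _ _ _ (comp_mpoly lq' \o comp_mpoly lq) idfun) => /= [c|].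
  by rewrite !comp_mpolyC.
exact: lqK.
Qed.

Lemma mpolyXU_neq0 (R : comNzRingType) (n : nat) (i : 'I_n) : 'X_i != 0 :> {mpoly R[n]}.
Proof. by apply: contra_neq (@oner_neq0 R) => X0; rewrite -(mevalXU (fun=> 1) i) X0 meval0. Qed.

Section LocalImage.
Variables (R : comNzRingType) (n n' m : nat) (gens : 'I_m -> {mpoly R[n]}).
Variables (f : {rmorphism {mpoly R[n']} -> {mpoly R[n]}}) (u : {mpoly R[n']}).

(* [p] is in the image of [f] modulo [gens], once [f u] is inverted. *)
Definition in_local_image p := exists N a, in_ideal gens (f u ^+ N * p - f a).

Lemma in_local_image_rmorph a : in_local_image (f a).
Proof. by exists 0%N, a; rewrite expr0 mul1r subrr; apply: in_ideal0. Qed.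

Lemma in_local_imageD p q :
  in_local_image p -> in_local_image q -> in_local_image (p + q).
Proof.
move=> [N [a ha]] [M [b hb]]; exists (N + M)%N, (u ^+ M * a + u ^+ N * b).
have -> : f u ^+ (N + M) * (p + q) - f (u ^+ M * a + u ^+ N * b) =
    f u ^+ M * (f u ^+ N * p - f a) + f u ^+ N * (f u ^+ M * q - f b).
  by rewrite rmorphD !rmorphM !rmorphXn exprD; ring.
by apply: in_idealD; apply: in_idealMl.
Qed.

Lemma in_local_imageM p q :
  in_local_image p -> in_local_image q -> in_local_image (p * q).
Proof.
move=> [N [a ha]] [M [b hb]]; exists (N + M)%N, (a * b).
have -> : f u ^+ (N + M) * (p * q) - f (a * b) =
    (f u ^+ N * p - f a) * (f u ^+ M * q) + f a * (f u ^+ M * q - f b).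
  by rewrite rmorphM exprD; ring.
by apply: in_idealD; [apply: in_idealMr | apply: in_idealMl].
Qed.

Lemma in_local_image_all :
  (forall c, f c%:MP = c%:MP) -> (forall i, in_local_image 'X_i) ->
  forall p, in_local_image p.
Proof.
move=> fC fX; elim/mpoly_ring_ind => [c||p q|p q]; last 2 first.
- exact: in_local_imageD.
- exact: in_local_imageM.
- by rewrite -fC; apply: in_local_image_rmorph.
- exact: fX.
Qed.

End LocalImage.

Section VarCancel.
Variables (R : idomainType) (n : nat) (j : 'I_n).

Definition var0_tuple : n.-tuple {mpoly R[n]} := [tuple if i == j then 0 else 'X_i | i < n].

Lemma comp_var0_tupleX i : 'X_i \mPo var0_tuple = if i == j then 0 else 'X_i.
Proof. by rewrite comp_mpolyXU -tnth_nth tnth_mktuple. Qed.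

Lemma mpoly_split_var p : exists q, p = p \mPo var0_tuple + 'X_j * q.
Proof.
elim/mpoly_ring_ind: p => [c|i|p q [a ep] [b eq]|p q [a ep] [b eq]].
- by exists 0; rewrite comp_mpolyC mulr0 addr0.
- rewrite comp_var0_tupleX; case: eqP => [->|_]; first by exists 1; rewrite add0r mulr1.
  by exists 0; rewrite mulr0 addr0.
- by exists (a + b); rewrite rmorphD /= {1}ep {1}eq; ring.
- exists (a * (q \mPo var0_tuple) + (p \mPo var0_tuple) * b + 'X_j * a * b).
  by rewrite rmorphM /= {1}ep {1}eq; ring.
Qed.

Lemma mulX_dvd_cancel F a H :
  F \mPo var0_tuple != 0 -> 'X_j * a = F * H -> exists H', a = F * H'.
Proof.
move=> nzF eXa; have [H' eH] := mpoly_split_var H.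
have : (F * H) \mPo var0_tuple == 0.
  by rewrite -eXa rmorphM /= comp_var0_tupleX eqxx mul0r.
rewrite rmorphM /= mulf_eq0 (negbTE nzF) /= => /eqP H0.
exists H'; apply: (mulfI (x := 'X_j)); first exact: mpolyXU_neq0.
by rewrite eXa eH H0 add0r mulrCA.
Qed.

End VarCancel.
Arguments var0_tuple {R n} j.

Section IdealWith.
Variables (R : comNzRingType) (n m : nat) (gens : 'I_m -> {mpoly R[n]}).
Implicit Types (p q : {mpoly R[n]}) (us : seq {mpoly R[n]}).

(* [p] lies in the ideal generated by [gens] and the elements of [us]. *)
Fixpoint in_ideal_with us p : Prop :=
  if us is u :: us' then exists a, in_ideal_with us' (p - a * u) else in_ideal gens p.

Lemma in_ideal_with_ideal us p : in_ideal gens p -> in_ideal_with us p.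
Proof.
elim: us p => [//|u us IH] p /= gp; exists 0.
by rewrite mul0r subr0; apply: IH.
Qed.

Lemma in_ideal_withD us p q :
  in_ideal_with us p -> in_ideal_with us q -> in_ideal_with us (p + q).
Proof.
elim: us p q => [|u us IH] p q /=; first exact: in_idealD.
move=> [a ha] [b hb]; exists (a + b).
have -> : p + q - (a + b) * u = (p - a * u) + (q - b * u) by ring.
exact: IH.
Qed.

Lemma in_ideal_withMl us c p : in_ideal_with us p -> in_ideal_with us (c * p).
Proof.
elim: us p => [|u us IH] p /=; first exact: in_idealMl.
move=> [a ha]; exists (c * a).
have -> : c * p - c * a * u = c * (p - a * u) by ring.
exact: IH.
Qed.

Lemma in_ideal_with_mem us u : u \in us -> in_ideal_with us u.
Proof.
elim: us => [//|v us IH]; rewrite inE => /predU1P[->|u_us] /=.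
  by exists 1; rewrite mul1r subrr; apply/in_ideal_with_ideal/in_ideal0.
by exists 0; rewrite mul0r subr0; apply: IH.
Qed.

Lemma rmorph_in_ideal_with_eq0 (S : nzRingType) (f : {rmorphism {mpoly R[n]} -> S}) us p :
  (forall i, f (gens i) = 0) -> (forall u, u \in us -> f u = 0) ->
  in_ideal_with us p -> f p = 0.
Proof.
move=> fgens; elim: us p => [|u us IH] p fus /=; first exact: rmorph_in_ideal_eq0.
move=> [a /IH fpa]; have /eqP := fpa (fun v vus => fus v (@mem_behead _ (u :: us) v vus)).
by rewrite rmorphB rmorphM (fus u (mem_head u us)) mulr0 subr0 => /eqP.
Qed.

Lemma in_ideal_with_radical (Z : {mpoly R[n]} -> Prop) us p :
    (forall q r, Z q -> Z (r * q)) ->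
    (forall u, u \in us -> forall q, Z q -> exists N, in_ideal gens (u ^+ N * q)) ->
  Z p -> in_ideal_with us p -> exists e, in_ideal gens (p ^+ e).
Proof.
move=> ZM; elim: us p => [|u us IH] p sat Zp /=; first by exists 1%N; rewrite expr1.
move=> [a hB]; have [N hN] := sat u (mem_head u us) p Zp.
pose S := \sum_(i < N) p ^+ (N.-1 - i) * (a * u) ^+ i.
have powE : p ^+ N = (a * u) ^+ N + (p - a * u) * S by rewrite -subrXX addrC subrK.
have hpN : in_ideal_with us (p ^+ N.+1).
  have -> : p ^+ N.+1 = a ^+ N * (u ^+ N * p) + (p * S) * (p - a * u).
    by rewrite exprS powE exprMn; ring.
  apply: in_ideal_withD; last exact: in_ideal_withMl.
  by apply/in_ideal_with_ideal/in_idealMl.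
have ZpN : Z (p ^+ N.+1) by rewrite exprSr; apply: ZM.
have [e he] := IH _ (fun v vus => sat v (@mem_behead _ (u :: us) v vus)) ZpN hpN.
by exists (N.+1 * e)%N; rewrite exprM.
Qed.

End IdealWith.

(** * Matrices *)

Lemma ord2P (i : 'I_2) : i = 0 \/ i = 1.
Proof. by case: i => [[|[|//]] ?]; [left | right]; apply/val_inj. Qed.

Lemma det_mx22 (R : comNzRingType) (A : 'M[R]_2) : \det A = A 0 0 * A 1 1 - A 0 1 * A 1 0.
Proof.
have lift2 (i : 'I_2) (j : 'I_1) : lift i j = if val i == 0%N then 1 else 0.
  by apply/val_inj; case: i => [[|[|]]] //; case: j => [[|]].
rewrite (expand_det_row _ 0) !big_ord_recl big_ord0 /cofactor !det_mx11 !mxE !lift2 /=.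
by rewrite expr0 expr1 (_ : ord0 = 0) //; ring.
Qed.

Lemma mulmx22 (R : comNzRingType) (A B : 'M[R]_2) i j :
  (A *m B) i j = A i 0 * B 0 j + A i 1 * B 1 j.
Proof.
by rewrite mxE !big_ord_recl big_ord0 addr0 (_ : lift ord0 ord0 = 1 :> 'I_2) //; apply/val_inj.
Qed.

Section CommutatorAdj.
Variables (R : comNzRingType) (n : nat) (X Y : 'M[R]_n).

Lemma commutator_adj : X *m Y *m \adj X *m \adj Y - 1%:M =
  (X *m Y - Y *m X) *m (\adj X *m \adj Y) + (\det X * \det Y - 1)%:M.
Proof.
have YXadj : Y *m X *m (\adj X *m \adj Y) = (\det X * \det Y)%:M.
  rewrite mulmxA -(mulmxA Y) mul_mx_adj mul_mx_scalar -scalemxAl mul_mx_adj.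
  by rewrite scale_scalar_mx.
by rewrite mulmxBl YXadj !mulmxA raddfB /= addrA subrK.
Qed.

Lemma commutator_of_adj : X *m Y - Y *m X =
  (X *m Y *m \adj X *m \adj Y - 1%:M) *m (Y *m X) + (1 - \det X * \det Y)%:M *m (X *m Y).
Proof.
have adjYX : X *m Y *m \adj X *m \adj Y *m (Y *m X) = (\det X * \det Y) *: (X *m Y).
  rewrite mulmxA -(mulmxA _ (\adj Y)) mul_adj_mx mul_mx_scalar -scalemxAl -mulmxA.
  by rewrite mul_adj_mx mul_mx_scalar scalerA mulrC.
by rewrite mulmxBl mul1mx adjYX mul_scalar_mx scalerBl scale1r [RHS]addrC addrA subrK.
Qed.

End CommutatorAdj.

Section MatrixIdeal.
Variables (R : comNzRingType) (n m : nat) (gens : 'I_m -> {mpoly R[n]}).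

Definition mx_in_ideal p q (M : 'M[{mpoly R[n]}]_(p, q)) := forall i j, in_ideal gens (M i j).

Lemma mx_in_idealD p q (M N : 'M_(p, q)) :
  mx_in_ideal M -> mx_in_ideal N -> mx_in_ideal (M + N).
Proof. by move=> hM hN i j; rewrite mxE; apply: in_idealD. Qed.

Lemma mx_in_ideal_mull p q r (M : 'M_(p, q)) (N : 'M_(q, r)) :
  mx_in_ideal M -> mx_in_ideal (M *m N).
Proof.
move=> hM i j; rewrite mxE; apply: (big_ind (in_ideal gens)) => [||l _].
- exact: in_ideal0.
- exact: in_idealD.
- exact: in_idealMr.
Qed.

Lemma mx_in_ideal_scalar p c : in_ideal gens c -> mx_in_ideal (c%:M : 'M_p).
Proof.
move=> hc i j; rewrite mxE; case: (i == j); last by rewrite mulr0n; apply: in_ideal0.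
by rewrite mulr1n.
Qed.

End MatrixIdeal.

(** * The variety of commuting pairs *)

Lemma sign_coefs_eq0 (F : fieldType) (A B C D : F) : 2%:R != 0 :> F ->
  (forall e d : F, e ^+ 2 = 1 -> d ^+ 2 = 1 -> A + B * e + C * d + D * (e * d) = 0) ->
  [/\ A = 0, B = 0, C = 0 & D = 0].
Proof.
move=> two_neq0 vanish; pose v e d := A + B * e + C * d + D * (e * d).
have [vpp vpm vmp vmm] : [/\ v 1 1 = 0, v 1 (-1) = 0, v (-1) 1 = 0 & v (-1) (-1) = 0].
  by split; apply: vanish; rewrite ?sqrrN expr1n.
have cancel4 (x : F) : 4%:R * x = 0 -> x = 0.
  move/eqP; rewrite -[4%N]/(2 * 2)%N natrM -mulrA !mulf_eq0 (negbTE two_neq0) /=.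
  by move/eqP.
split; apply: cancel4.
- have -> : 4%:R * A = v 1 1 + v 1 (-1) + v (-1) 1 + v (-1) (-1) by rewrite /v; ring.
  by rewrite vpp vpm vmp vmm !addr0.
- have -> : 4%:R * B = v 1 1 + v 1 (-1) - v (-1) 1 - v (-1) (-1) by rewrite /v; ring.
  by rewrite vpp vpm vmp vmm !subr0 addr0.
- have -> : 4%:R * C = v 1 1 - v 1 (-1) + v (-1) 1 - v (-1) (-1) by rewrite /v; ring.
  by rewrite vpp vpm vmp vmm !subr0 addr0.
- have -> : 4%:R * D = v 1 1 - v 1 (-1) - v (-1) 1 + v (-1) (-1) by rewrite /v; ring.
  by rewrite vpp vpm vmp vmm !subr0 addr0.
Qed.

Definition ratfunC (k : fieldType) (d : nat) : {rmorphism k -> ratfun k d} :=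
  (@FracField.tofrac _ : {mpoly k[d]} -> ratfun k d) \o (@mpolyC d k).

HB.instance Definition _ (k : fieldType) (n d : nat) (h : 'I_n -> ratfun k d) :=
  GRing.RMorphism.copy (ev_ratfun h) (mmap (ratfunC k d) h).

Lemma ev_ratfunE (k : fieldType) (n d : nat) (h : 'I_n -> ratfun k d) :
  ev_ratfun h =1 mmap (ratfunC k d) h.
Proof. by []. Qed.

Lemma ev_ratfunX (k : fieldType) (n d : nat) (h : 'I_n -> ratfun k d) i :
  ev_ratfun h 'X_i = h i.
Proof. by rewrite ev_ratfunE mmapX mmap1U. Qed.

Lemma ev_ratfunC (k : fieldType) (n d : nat) (h : 'I_n -> ratfun k d) c :
  ev_ratfun h c%:MP = FracField.tofrac c%:MP.
Proof. by rewrite ev_ratfunE mmapC. Qed.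

(* X = [[t0, t1], [x2, x3]] and Y = a X + b with a = t3 / t1, b = t2 / t1: then
   det X = 1 determines x2, and det Y = a^2 + a b tr X + b^2 = 1 determines tr X. *)
Definition SI_point (F : fieldType) (t0 t1 t2 t3 : F) (j : nat) : F :=
  let trX := (t1 ^+ 2 - t2 ^+ 2 - t3 ^+ 2) / (t2 * t3) in
  let x3 := trX - t0 in
  let x2 := (t0 * x3 - 1) / t1 in
  let a := t3 / t1 in
  let b := t2 / t1 in
  nth 0 [:: t0; t1; x2; x3; a * t0 + b; a * t1; a * x2; a * x3 + b] j.

Section SIPoint.
Variables (F : fieldType) (t0 t1 t2 t3 : F).
Hypotheses (t1_neq0 : t1 != 0) (t2_neq0 : t2 != 0) (t3_neq0 : t3 != 0).
Local Notation v := (SI_point t0 t1 t2 t3).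

Lemma SI_point_eqs :
  [/\ v 0 * v 3 - v 1 * v 2 - 1 = 0, v 4 * v 7 - v 5 * v 6 - 1 = 0,
      v 1 * v 6 - v 5 * v 2 = 0, v 1 * (v 7 - v 4) - v 5 * (v 3 - v 0) = 0
    & v 6 * (v 3 - v 0) - v 2 * (v 7 - v 4) = 0].
Proof. by rewrite /SI_point /=; split; field; rewrite ?t1_neq0 ?t2_neq0 ?t3_neq0. Qed.

Lemma SI_point_coord : v 1 * v 4 - v 5 * v 0 = t2.
Proof. by rewrite /SI_point /=; field. Qed.

End SIPoint.

Section CommutingPairs.
Variable k : fieldType.
Local Notation P8 := {mpoly k[8]}.
Local Notation xv j := ('X_(inord j) : P8).
Local Notation x0 := (xv 0). Local Notation x1 := (xv 1).
Local Notation x2 := (xv 2). Local Notation x3 := (xv 3).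
Local Notation y0 := (xv 4). Local Notation y1 := (xv 5).
Local Notation y2 := (xv 6). Local Notation y3 := (xv 7).
Local Notation dX1 := (x0 * x3 - x1 * x2 - 1).
Local Notation dY1 := (y0 * y3 - y1 * y2 - 1).
Local Notation c00 := (x1 * y2 - y1 * x2).
Local Notation c01 := (x1 * (y3 - y0) - y1 * (x3 - x0)).
Local Notation c10 := (y2 * (x3 - x0) - x2 * (y3 - y0)).

(* det X = 1, det Y = 1 and three entries of XY - YX (the fourth is minus the first). *)
Definition comm_eqs (i : 'I_5) : P8 :=
  match val i with 0 => dX1 | 1 => dY1 | 2 => c00 | 3 => c01 | _ => c10 end.

Lemma in_comm_eqs_comb a0 a1 a2 a3 a4 p :
  p = a0 * dX1 + a1 * dY1 + a2 * c00 + a3 * c01 + a4 * c10 -> in_ideal comm_eqs p.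
Proof.
move=> ->; exists (fun i => nth 0 [:: a0; a1; a2; a3; a4] i).
by rewrite !big_ord_recl big_ord0 /comm_eqs /=; ring.
Qed.
Arguments in_comm_eqs_comb a0 a1 a2 a3 a4 {p}.

Lemma matXE : [/\ matX k 0 0 = x0, matX k 0 1 = x1, matX k 1 0 = x2 & matX k 1 1 = x3].
Proof. by split; rewrite mxE. Qed.

Lemma matYE : [/\ matY k 0 0 = y0, matY k 0 1 = y1, matY k 1 0 = y2 & matY k 1 1 = y3].
Proof. by split; rewrite mxE. Qed.

Lemma det_matX : \det (matX k) = x0 * x3 - x1 * x2.
Proof. by rewrite det_mx22 !mxE. Qed.

Lemma det_matY : \det (matY k) = y0 * y3 - y1 * y2.
Proof. by rewrite det_mx22 !mxE. Qed.

Lemma commutator_matXY (C := matX k *m matY k - matY k *m matX k) :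
  [/\ C 0 0 = c00, C 0 1 = c01, C 1 0 = c10 & C 1 1 = - c00].
Proof.
have [X00 X01 X10 X11] := matXE; have [Y00 Y01 Y10 Y11] := matYE.
rewrite /C; split; rewrite mxE [fun_of_matrix (- _) _ _]mxE !mulmx22.
all: by rewrite ?X00 ?X01 ?X10 ?X11 ?Y00 ?Y01 ?Y10 ?Y11; ring.
Qed.

Lemma SI_eqs_in_comm_eqs i : in_ideal comm_eqs (SI_eqs k i).
Proof.
have [C00 C01 C10 C11] := commutator_matXY.
have commC : mx_in_ideal comm_eqs (matX k *m matY k - matY k *m matX k).
  move=> r c; case: (ord2P r) => ->; case: (ord2P c) => ->.
  - by rewrite C00; apply: (in_comm_eqs_comb 0 0 1 0 0); ring.
  - by rewrite C01; apply: (in_comm_eqs_comb 0 0 0 1 0); ring.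
  - by rewrite C10; apply: (in_comm_eqs_comb 0 0 0 0 1); ring.
  - by rewrite C11; apply: (in_comm_eqs_comb 0 0 (-1) 0 0); ring.
have detXY : in_ideal comm_eqs (\det (matX k) * \det (matY k) - 1).
  by rewrite det_matX det_matY; apply: (in_comm_eqs_comb (y0 * y3 - y1 * y2) 1 0 0 0); ring.
have SIC : mx_in_ideal comm_eqs
    (matX k *m matY k *m \adj (matX k) *m \adj (matY k) - 1%:M).
  rewrite commutator_adj; apply: mx_in_idealD; first exact: mx_in_ideal_mull.
  exact: mx_in_ideal_scalar.
case: i => [[|[|[|[|[|[|//]]]]]] lt_i6] /=; try exact: SIC.
- by rewrite /SI_eqs /= det_matX; apply: (in_comm_eqs_comb 1 0 0 0 0); ring.
- by rewrite /SI_eqs /= det_matY; apply: (in_comm_eqs_comb 0 1 0 0 0); ring.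
Qed.

Lemma comm_eqs_in_SI_eqs i : in_ideal (SI_eqs k) (comm_eqs i).
Proof.
have [C00 C01 C10 _] := commutator_matXY.
have SI j (lt_j6 : (j < 6)%N) : in_ideal (SI_eqs k) (SI_eqs k (Ordinal lt_j6)).
  exact: in_ideal_gen.
have SIC : mx_in_ideal (SI_eqs k)
    (matX k *m matY k *m \adj (matX k) *m \adj (matY k) - 1%:M).
  move=> r c; case: (ord2P r) => ->; case: (ord2P c) => ->.
  - exact: (SI 2%N).
  - exact: (SI 3%N).
  - exact: (SI 4%N).
  - exact: (SI 5%N).
have commC : mx_in_ideal (SI_eqs k) (matX k *m matY k - matY k *m matX k).
  rewrite commutator_of_adj; apply: mx_in_idealD; first exact: mx_in_ideal_mull.
  apply/mx_in_ideal_mull/mx_in_ideal_scalar.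
  have -> : 1 - \det (matX k) * \det (matY k) =
      - \det (matY k) * (\det (matX k) - 1) - (\det (matY k) - 1) by ring.
  by apply: in_idealB; [apply: in_idealMl; apply: (SI 0%N) | apply: (SI 1%N)].
case: i => [[|[|[|[|[|//]]]]] lt_i5]; rewrite /comm_eqs /=.
- by rewrite -det_matX; apply: (SI 0%N).
- by rewrite -det_matY; apply: (SI 1%N).
- by rewrite -C00.
- by rewrite -C01.
- by rewrite -C10.
Qed.

Lemma in_SI_eqsE p : in_ideal (SI_eqs k) p <-> in_ideal comm_eqs p.
Proof.
by split; apply: in_ideal_sub; [apply: SI_eqs_in_comm_eqs | apply: comm_eqs_in_SI_eqs].
Qed.

Local Notation R4 := (ratfun k 4).
Definition tfrac (j : nat) : R4 := FracField.tofrac ('X_(inord j) : {mpoly k[4]}).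
Definition SI_param (i : 'I_8) : R4 := SI_point (tfrac 0) (tfrac 1) (tfrac 2) (tfrac 3) i.
Local Notation ev := (ev_ratfun SI_param).

Lemma ev_xv j : (j < 8)%N -> ev (xv j) = SI_point (tfrac 0) (tfrac 1) (tfrac 2) (tfrac 3) j.
Proof. by move=> lt_j8; rewrite ev_ratfunX /SI_param inordK. Qed.

Lemma tfrac_neq0 j : tfrac j != 0.
Proof. by rewrite tofrac_eq0 mpolyXU_neq0. Qed.

Lemma ev_comm_eqs i : ev (comm_eqs i) = 0.
Proof.
have [eX eY e00 e01 e10] := SI_point_eqs (tfrac 0) (tfrac_neq0 1) (tfrac_neq0 2) (tfrac_neq0 3).
by case: i => [[|[|[|[|[|//]]]]] lt_i5];
  rewrite /comm_eqs /= !(rmorphB, rmorphM, rmorph1) /= !ev_xv.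
Qed.

Lemma ev_chart_coord : ev (x1 * y0 - y1 * x0) = tfrac 2.
Proof.
by rewrite !(rmorphB, rmorphM) /= !ev_xv // SI_point_coord ?tfrac_neq0.
Qed.

Lemma ev_in_comm_eqs_eq0 p : in_ideal comm_eqs p -> ev p = 0.
Proof. exact: rmorph_in_ideal_eq0 ev_comm_eqs. Qed.

Lemma ev_eq0_of_radical p : in_radical (SI_eqs k) p -> ev p = 0.
Proof.
by apply: rmorph_in_radical_eq0 => i; apply/ev_in_comm_eqs_eq0/in_SI_eqsE/in_ideal_gen.
Qed.

Local Notation tc j := ('X_(inord j) : {mpoly k[5]}).
Local Notation tp j := ('X_(inord j) : {mpoly k[4]}).
Local Notation z := ('X_0 : {mpoly k[1]}).

Ltac comp_vars :=
  rewrite ?(rmorphD, rmorphB, rmorphN, rmorphM, rmorph1, rmorphXn, comp_mpolyC) /=;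
  rewrite ?comp_mpolyX_inord //=.

Definition ker_sub_sat (u : P8) :=
  forall p, ev p = 0 -> exists N, in_ideal comm_eqs (u ^+ N * p).

(* On x1 != 0 a commuting pair is determined by x0, x1, tr X, x1 y0 - y1 x0 and y1,
   subject to the single relation chart_rel, the equation det Y = 1.  It is linear in
   tr X with coefficient t3 t4, so t0, t1, t3, t4 remain as free parameters. *)
Definition chart_coords : 5.-tuple P8 := [tuple x0; x1; x0 + x3; x1 * y0 - y1 * x0; y1].
Definition chart_param : 4.-tuple {mpoly k[5]} := [tuple tc 0; tc 1; tc 3; tc 4].
Definition chart_rel : {mpoly k[5]} := tc 3 ^+ 2 + tc 2 * tc 3 * tc 4 + tc 4 ^+ 2 - tc 1 ^+ 2.

Lemma chart_coords_local p : in_local_image comm_eqs (comp_mpoly chart_coords) (tc 1) p.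
Proof.
apply: in_local_image_all => [c|i]; first exact: comp_mpolyC.
rewrite -[i]inord_val; case: i => [[|[|[|[|[|[|[|[|//]]]]]]]] _] /=.
- by exists 0%N, (tc 0); apply: (in_comm_eqs_comb 0 0 0 0 0); comp_vars; ring.
- by exists 0%N, (tc 1); apply: (in_comm_eqs_comb 0 0 0 0 0); comp_vars; ring.
- exists 1%N, (tc 0 * (tc 2 - tc 0) - 1).
  by apply: (in_comm_eqs_comb (-1) 0 0 0 0); comp_vars; ring.
- by exists 0%N, (tc 2 - tc 0); apply: (in_comm_eqs_comb 0 0 0 0 0); comp_vars; ring.
- by exists 1%N, (tc 3 + tc 4 * tc 0); apply: (in_comm_eqs_comb 0 0 0 0 0); comp_vars; ring.
- by exists 0%N, (tc 4); apply: (in_comm_eqs_comb 0 0 0 0 0); comp_vars; ring.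
- exists 2%N, (tc 4 * (tc 0 * (tc 2 - tc 0) - 1)).
  by apply: (in_comm_eqs_comb (- y1) 0 x1 0 0); comp_vars; ring.
- exists 1%N, (tc 3 + tc 4 * (tc 2 - tc 0)).
  by apply: (in_comm_eqs_comb 0 0 0 1 0); comp_vars; ring.
Qed.

Lemma chart_rel_in_comm_eqs : in_ideal comm_eqs (chart_rel \mPo chart_coords).
Proof.
apply: (in_comm_eqs_comb (- y1 ^+ 2) (x1 ^+ 2) (x1 * y1) (- x1 * y0) 0).
by rewrite /chart_rel; comp_vars; ring.
Qed.

Lemma chart_param_local q :
  in_local_image (fun _ : 'I_1 => chart_rel) (comp_mpoly chart_param) (tp 2 * tp 3) q.
Proof.
apply: in_local_image_all => [c|i]; first exact: comp_mpolyC.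
rewrite -[i]inord_val; case: i => [[|[|[|[|[|//]]]]] _] /=.
- by exists 0%N, (tp 0); apply/in_ideal1; exists 0; comp_vars; ring.
- by exists 0%N, (tp 1); apply/in_ideal1; exists 0; comp_vars; ring.
- exists 1%N, (tp 1 ^+ 2 - tp 2 ^+ 2 - tp 3 ^+ 2); apply/in_ideal1; exists 1.
  by rewrite /chart_rel; comp_vars; ring.
- by exists 0%N, (tp 2); apply/in_ideal1; exists 0; comp_vars; ring.
- by exists 0%N, (tp 3); apply/in_ideal1; exists 0; comp_vars; ring.
Qed.

Lemma ev_chart r : ev ((r \mPo chart_param) \mPo chart_coords) = FracField.tofrac r.
Proof.
apply: (@mpoly_rmorph_ext _ _ _ (ev \o comp_mpoly chart_coords \o comp_mpoly chart_param)
  (@FracField.tofrac _)) => [c|i] /=; first by rewrite !comp_mpolyC ev_ratfunC.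
rewrite -[i]inord_val; case: i => [[|[|[|[|//]]]] lt_i4]; comp_vars.
- by rewrite ev_xv.
- by rewrite ev_xv.
- exact: ev_chart_coord.
- by rewrite ev_xv // /SI_point /= divfK ?tfrac_neq0.
Qed.

Lemma chart_rel_at0_neq0 j : (j == 3%N) || (j == 4%N) ->
  chart_rel \mPo var0_tuple (inord j) != 0.
Proof.
move=> j34; apply: contra_neq (@oner_neq0 k).
(* At t_(7 - j) = 1 and all other variables 0, chart_rel with t_j = 0 takes the value 1. *)
move=> /(congr1 (meval (fun i : 'I_5 => (val i == 7 - j)%N%:R))).
rewrite /chart_rel !(rmorphD, rmorphB, rmorphN, rmorphM, rmorphXn) /= !comp_var0_tupleX.
by case/orP: j34 => /eqP ->; rewrite -!val_eqE /= !inordK //= !mevalXU !inordK //=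
  !(meval0, mul0r, add0r, addr0, mulr1, subr0).
Qed.

Lemma chart_rel_cancel N q H :
  (tc 3 * tc 4) ^+ N * q = chart_rel * H -> exists H', q = chart_rel * H'.
Proof.
elim: N q H => [|N IH] q H; first by rewrite expr0 mul1r => ->; exists H.
rewrite exprS -mulrA -mulrA => /mulX_dvd_cancel[]; first exact: chart_rel_at0_neq0.
move=> H1 /mulX_dvd_cancel[]; first exact: chart_rel_at0_neq0.
exact: IH.
Qed.

Lemma ker_sub_sat_x1 : ker_sub_sat x1.
Proof.
move=> p evp; have [N [q hq]] := chart_coords_local p.
have [M [r /in_ideal1[H eH]]] := chart_param_local q.
have x1E : tc 1 \mPo chart_coords = x1 by comp_vars.
have t34E : (tp 2 * tp 3) \mPo chart_param = tc 3 * tc 4 by comp_vars.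
rewrite /= x1E in hq; rewrite /= t34E in eH.
have ev_q : ev (q \mPo chart_coords) = 0.
  move: (ev_in_comm_eqs_eq0 hq).
  by rewrite rmorphB rmorphM /= evp mulr0 sub0r => /eqP; rewrite oppr_eq0 => /eqP.
have r0 : r = 0.
  have ev_rel : ev ((H * chart_rel) \mPo chart_coords) = 0.
    by apply: ev_in_comm_eqs_eq0; rewrite rmorphM; apply/in_idealMl/chart_rel_in_comm_eqs.
  have ev_lhs : ev (((tc 3 * tc 4) ^+ M * q) \mPo chart_coords) = 0.
    by rewrite !rmorphM /= ev_q mulr0.
  move: ev_rel; rewrite -eH rmorphB rmorphB /= ev_lhs ev_chart sub0r => /eqP.
  by rewrite oppr_eq0 tofrac_eq0 => /eqP.
move: eH; rewrite r0 rmorph0 subr0 [H * _]mulrC => /chart_rel_cancel[H' qE].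
exists N; rewrite -[_ * p](subrK (q \mPo chart_coords)); apply: in_idealD => //.
by rewrite qE rmorphM /=; apply: in_idealMr; apply: chart_rel_in_comm_eqs.
Qed.

Definition transpose_coords : 8.-tuple P8 := [tuple x0; x2; x1; x3; y0; y2; y1; y3].
Definition swap_coords : 8.-tuple P8 := [tuple y0; y1; y2; y3; x0; x1; x2; x3].
(* Conjugation of both matrices by [[1, 1], [0, 1]], and by its inverse. *)
Definition conj_coords : 8.-tuple P8 :=
  [tuple x0 + x2; x1 + x3 - x0 - x2; x2; x3 - x2; y0 + y2; y1 + y3 - y0 - y2; y2; y3 - y2].
Definition conj_inv_coords : 8.-tuple P8 :=
  [tuple x0 - x2; x1 + x0 - x2 - x3; x2; x3 + x2; y0 - y2; y1 + y0 - y2 - y3; y2; y3 + y2].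

Lemma transpose_coords_stable i : in_ideal comm_eqs (comm_eqs i \mPo transpose_coords).
Proof.
case: i => [[|[|[|[|[|//]]]]] lt_i5]; rewrite /comm_eqs /=.
- by apply: (in_comm_eqs_comb 1 0 0 0 0); comp_vars; ring.
- by apply: (in_comm_eqs_comb 0 1 0 0 0); comp_vars; ring.
- by apply: (in_comm_eqs_comb 0 0 (-1) 0 0); comp_vars; ring.
- by apply: (in_comm_eqs_comb 0 0 0 0 (-1)); comp_vars; ring.
- by apply: (in_comm_eqs_comb 0 0 0 (-1) 0); comp_vars; ring.
Qed.

Lemma swap_coords_stable i : in_ideal comm_eqs (comm_eqs i \mPo swap_coords).
Proof.
case: i => [[|[|[|[|[|//]]]]] lt_i5]; rewrite /comm_eqs /=.
- by apply: (in_comm_eqs_comb 0 1 0 0 0); comp_vars; ring.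
- by apply: (in_comm_eqs_comb 1 0 0 0 0); comp_vars; ring.
- by apply: (in_comm_eqs_comb 0 0 (-1) 0 0); comp_vars; ring.
- by apply: (in_comm_eqs_comb 0 0 0 (-1) 0); comp_vars; ring.
- by apply: (in_comm_eqs_comb 0 0 0 0 (-1)); comp_vars; ring.
Qed.

Lemma conj_coords_stable i : in_ideal comm_eqs (comm_eqs i \mPo conj_coords).
Proof.
case: i => [[|[|[|[|[|//]]]]] lt_i5]; rewrite /comm_eqs /=.
- by apply: (in_comm_eqs_comb 1 0 0 0 0); comp_vars; ring.
- by apply: (in_comm_eqs_comb 0 1 0 0 0); comp_vars; ring.
- by apply: (in_comm_eqs_comb 0 0 1 0 1); comp_vars; ring.
- by apply: (in_comm_eqs_comb 0 0 (-2) 1 (-1)); comp_vars; ring.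
- by apply: (in_comm_eqs_comb 0 0 0 0 1); comp_vars; ring.
Qed.

Lemma conj_inv_coords_stable i : in_ideal comm_eqs (comm_eqs i \mPo conj_inv_coords).
Proof.
case: i => [[|[|[|[|[|//]]]]] lt_i5]; rewrite /comm_eqs /=.
- by apply: (in_comm_eqs_comb 1 0 0 0 0); comp_vars; ring.
- by apply: (in_comm_eqs_comb 0 1 0 0 0); comp_vars; ring.
- by apply: (in_comm_eqs_comb 0 0 1 0 (-1)); comp_vars; ring.
- by apply: (in_comm_eqs_comb 0 0 2 1 (-1)); comp_vars; ring.
- by apply: (in_comm_eqs_comb 0 0 0 0 1); comp_vars; ring.
Qed.

Lemma transpose_coordsK p : (p \mPo transpose_coords) \mPo transpose_coords = p.
Proof.
apply: comp_mpolyK => i; rewrite -[i]inord_val.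
by case: i => [[|[|[|[|[|[|[|[|//]]]]]]]] lt_i8]; comp_vars.
Qed.

Lemma swap_coordsK p : (p \mPo swap_coords) \mPo swap_coords = p.
Proof.
apply: comp_mpolyK => i; rewrite -[i]inord_val.
by case: i => [[|[|[|[|[|[|[|[|//]]]]]]]] lt_i8]; comp_vars.
Qed.

Lemma conj_coordsK p : (p \mPo conj_coords) \mPo conj_inv_coords = p.
Proof.
apply: comp_mpolyK => i; rewrite -[i]inord_val.
by case: i => [[|[|[|[|[|[|[|[|//]]]]]]]] lt_i8]; comp_vars; comp_vars; ring.
Qed.

Lemma ker_sub_sat_transfer (s s' : 8.-tuple P8) u :
    (forall i, in_ideal comm_eqs (comm_eqs i \mPo s)) ->
    (forall i, in_ideal comm_eqs (comm_eqs i \mPo s')) ->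
    (forall p, (p \mPo s) \mPo s' = p) -> ev (u \mPo s) != 0 ->
  ker_sub_sat u -> ker_sub_sat (u \mPo s').
Proof.
move=> s_stable s'_stable sK evu sat_u p evp; have [N hN] := sat_u p evp.
have ev_ps : ev (p \mPo s) = 0.
  have := ev_in_comm_eqs_eq0 (in_ideal_stable (f := comp_mpoly s) s_stable hN).
  rewrite rmorphM rmorphXn /= rmorphM rmorphXn /= => /eqP.
  by rewrite mulf_eq0 expf_eq0 (negbTE evu) andbF => /eqP.
have [M hM] := sat_u _ ev_ps; exists M.
by have := in_ideal_stable (f := comp_mpoly s') s'_stable hM; rewrite rmorphM rmorphXn /= sK.
Qed.

Definition test_curve : 8.-tuple {mpoly k[1]} :=
  [tuple 1; z; z; 1 + z ^+ 2; 1; z; z; 1 + z ^+ 2].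

Lemma curve_ker_eq0 (lg : 8.-tuple {mpoly k[1]}) u :
    (forall i, comm_eqs i \mPo lg = 0) -> ker_sub_sat u -> u \mPo lg != 0 ->
  forall p, ev p = 0 -> p \mPo lg = 0.
Proof.
move=> lg_eqs sat_u ulg p evp; have [N hN] := sat_u p evp.
have := rmorph_in_ideal_eq0 (f := comp_mpoly lg) lg_eqs hN.
by rewrite rmorphM rmorphXn /= => /eqP; rewrite mulf_eq0 expf_eq0 (negbTE ulg) andbF => /eqP.
Qed.

Lemma test_curve_eqs i : comm_eqs i \mPo test_curve = 0.
Proof. by case: i => [[|[|[|[|[|//]]]]] lt_i5]; rewrite /comm_eqs /=; comp_vars; ring. Qed.

Lemma ev_neq0_of_curve u : u \mPo test_curve != 0 -> ev u != 0.
Proof.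
apply: contra_neq => /(curve_ker_eq0 test_curve_eqs ker_sub_sat_x1) -> //.
by comp_vars; apply: mpolyXU_neq0.
Qed.

Lemma ker_sub_sat_swap u : ker_sub_sat u -> (u \mPo swap_coords) \mPo test_curve != 0 ->
  ker_sub_sat (u \mPo swap_coords).
Proof.
move=> sat_u nz; apply: ker_sub_sat_transfer sat_u;
  [exact: swap_coords_stable.. | exact: swap_coordsK |].
exact: ev_neq0_of_curve.
Qed.

(* On S_I their common zeros are the pairs of scalar matrices. *)
Definition chart_fns : seq P8 := [:: x1; x2; x1 + x0 - x2 - x3; y1; y2; y1 + y0 - y2 - y3].

Lemma ker_sub_sat_chart_fns u : u \in chart_fns -> ker_sub_sat u.
Proof.
have z_neq0 : z != 0 by apply: mpolyXU_neq0.
have z2_neq0 : z ^+ 2 != 0 by rewrite expf_neq0.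
have sat_x2 : ker_sub_sat x2.
  have -> : x2 = x1 \mPo transpose_coords by comp_vars.
  apply: ker_sub_sat_transfer ker_sub_sat_x1;
    [exact: transpose_coords_stable.. | exact: transpose_coordsK |].
  by apply: ev_neq0_of_curve; comp_vars.
have sat_x : ker_sub_sat (x1 + x0 - x2 - x3).
  have -> : x1 + x0 - x2 - x3 = x1 \mPo conj_inv_coords by comp_vars.
  apply: ker_sub_sat_transfer ker_sub_sat_x1;
    [exact: conj_coords_stable | exact: conj_inv_coords_stable | exact: conj_coordsK |].
  apply: ev_neq0_of_curve; comp_vars; comp_vars.
  by rewrite [X in X != 0](_ : _ = z ^+ 2) //; ring.
have sat_y1 : ker_sub_sat y1.
  have -> : y1 = x1 \mPo swap_coords by comp_vars.
  by apply: (ker_sub_sat_swap ker_sub_sat_x1); comp_vars.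
have sat_y2 : ker_sub_sat y2.
  have -> : y2 = x2 \mPo swap_coords by comp_vars.
  by apply: (ker_sub_sat_swap sat_x2); comp_vars.
have sat_y : ker_sub_sat (y1 + y0 - y2 - y3).
  have -> : y1 + y0 - y2 - y3 = (x1 + x0 - x2 - x3) \mPo swap_coords by comp_vars.
  apply: (ker_sub_sat_swap sat_x); comp_vars; comp_vars.
  by rewrite [X in X != 0](_ : _ = - z ^+ 2) ?oppr_eq0 //; ring.
rewrite !inE => /orP[/eqP->|/orP[/eqP->|/orP[/eqP->|/orP[/eqP->|/orP[/eqP->|/eqP->]]]]].
- exact: ker_sub_sat_x1.
- exact: sat_x2.
- exact: sat_x.
- exact: sat_y1.
- exact: sat_y2.
- exact: sat_y.
Qed.

(* X = e [[1, z], [0, 1]] and Y = d, which is the pair of scalars (e, d) at z = 0. *)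
Definition line_to_scalars (e d : k) : 8.-tuple {mpoly k[1]} :=
  [tuple e%:MP; e%:MP * z; 0; e%:MP; d%:MP; 0; 0; d%:MP].
Definition scalars (e d : k) (i : 'I_8) : k := nth 0 [:: e; 0; 0; e; d; 0; 0; d] i.

Section ScalarPair.
Variables (e d : k).
Hypotheses (e2 : e ^+ 2 = 1) (d2 : d ^+ 2 = 1).

Lemma line_to_scalars_eqs i : comm_eqs i \mPo line_to_scalars e d = 0.
Proof.
case: i => [[|[|[|[|[|//]]]]] lt_i5]; rewrite /comm_eqs /=; comp_vars; try ring.
- by rewrite -mpolyCM -expr2 e2 mpolyC1; ring.
- by rewrite -mpolyCM -expr2 d2 mpolyC1; ring.
Qed.

Lemma meval_scalars_ker p : ev p = 0 -> meval (scalars e d) p = 0.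
Proof.
have e_neq0 : e != 0 by apply: contra_eq_neq e2 => ->; rewrite expr0n eq_sym oner_neq0.
move=> /(curve_ker_eq0 line_to_scalars_eqs ker_sub_sat_x1) p0.
rewrite -[LHS](meval_eq (v1 := fun i => (tnth (line_to_scalars e d) i).@[fun=> 0])).
  rewrite -comp_mpoly_meval p0 ?meval0 //.
  by comp_vars; rewrite mulf_neq0 ?mpolyC_eq0 ?mpolyXU_neq0.
move=> i; rewrite (tnth_nth 0) /scalars /=.
by case: i => [[|[|[|[|[|[|[|[|//]]]]]]]] lt_i8];
  rewrite /= ?(mevalM, mevalC, mevalXU, meval0) ?mulr0.
Qed.

Lemma meval_scalars_in_ideal_with q :
  in_ideal_with comm_eqs chart_fns q -> meval (scalars e d) q = 0.
Proof.
apply: rmorph_in_ideal_with_eq0 => [i|u].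
  case: i => [[|[|[|[|[|//]]]]] lt_i5];
  rewrite /comm_eqs /= ?(rmorphB, rmorphM, rmorph1) /= ?mevalXU /scalars ?inordK //=;
  by rewrite -?expr2 ?e2 ?d2; ring.
by rewrite !inE => /orP[/eqP->|/orP[/eqP->|/orP[/eqP->|/orP[/eqP->|/orP[/eqP->|/eqP->]]]]];
  rewrite ?(rmorphB, rmorphD) /= ?mevalXU /scalars ?inordK //=; ring.
Qed.

End ScalarPair.

Local Notation in_K := (in_ideal_with comm_eqs chart_fns).
Local Notation lin4 A B C D := (A%:MP + B%:MP * x0 + C%:MP * y0 + D%:MP * (x0 * y0)).

Lemma in_K_chart_fn j : in_K (nth 0 chart_fns j).
Proof.
have [lt_j6|le6j] := ltnP j (size chart_fns); first exact/in_ideal_with_mem/mem_nth.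
by rewrite nth_default //; apply/in_ideal_with_ideal/in_ideal0.
Qed.

Lemma in_K_scalar_rels :
  [/\ in_K (x3 - x0), in_K (y3 - y0), in_K (x0 ^+ 2 - 1) & in_K (y0 ^+ 2 - 1)].
Proof.
have K_eq q q' : q = q' -> in_K q' -> in_K q by move->.
have Kx3 : in_K (x3 - x0).
  apply: (K_eq _ (x1 + (-1) * x2 + (-1) * (x1 + x0 - x2 - x3))); first by ring.
  by apply: in_ideal_withD; [apply: in_ideal_withD|]; try apply: in_ideal_withMl;
    [apply: (in_K_chart_fn 0) | apply: (in_K_chart_fn 1) | apply: (in_K_chart_fn 2)].
have Ky3 : in_K (y3 - y0).
  apply: (K_eq _ (y1 + (-1) * y2 + (-1) * (y1 + y0 - y2 - y3))); first by ring.
  by apply: in_ideal_withD; [apply: in_ideal_withD|]; try apply: in_ideal_withMl;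
    [apply: (in_K_chart_fn 3) | apply: (in_K_chart_fn 4) | apply: (in_K_chart_fn 5)].
split=> //.
- apply: (K_eq _ ((x0 * x3 - x1 * x2 - 1) + (- x0) * (x3 - x0) + x2 * x1)); first by ring.
  apply: in_ideal_withD; [apply: in_ideal_withD|]; try apply: in_ideal_withMl => //.
    by apply/in_ideal_with_ideal/(in_comm_eqs_comb 1 0 0 0 0); ring.
  exact: (in_K_chart_fn 0).
- apply: (K_eq _ ((y0 * y3 - y1 * y2 - 1) + (- y0) * (y3 - y0) + y2 * y1)); first by ring.
  apply: in_ideal_withD; [apply: in_ideal_withD|]; try apply: in_ideal_withMl => //.
    by apply/in_ideal_with_ideal/(in_comm_eqs_comb 0 1 0 0 0); ring.
  exact: (in_K_chart_fn 3).
Qed.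

Lemma mod_chart_fns p : exists A B C D : k, in_K (p - lin4 A B C D).
Proof.
have [Kx3 Ky3 Kx0 Ky0] := in_K_scalar_rels.
have K0 : in_K 0 by apply/in_ideal_with_ideal/in_ideal0.
have K_eq q q' : q = q' -> in_K q' -> in_K q by move->.
elim/mpoly_ring_ind: p => [c|i|p q|p q].
- by exists c, 0, 0, 0; apply: (K_eq _ 0) => //; rewrite !mpolyC0; ring.
- rewrite -[i]inord_val; case: i => [[|[|[|[|[|[|[|[|//]]]]]]]] lt_i8] /=.
  + by exists 0, 1, 0, 0; apply: (K_eq _ 0) => //; rewrite !mpolyC0 mpolyC1; ring.
  + by exists 0, 0, 0, 0; apply: (K_eq _ x1 _ (in_K_chart_fn 0)); rewrite !mpolyC0; ring.
  + by exists 0, 0, 0, 0; apply: (K_eq _ x2 _ (in_K_chart_fn 1)); rewrite !mpolyC0; ring.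
  + by exists 0, 1, 0, 0; apply: (K_eq _ _ _ Kx3); rewrite !mpolyC0 mpolyC1; ring.
  + by exists 0, 0, 1, 0; apply: (K_eq _ 0) => //; rewrite !mpolyC0 mpolyC1; ring.
  + by exists 0, 0, 0, 0; apply: (K_eq _ y1 _ (in_K_chart_fn 3)); rewrite !mpolyC0; ring.
  + by exists 0, 0, 0, 0; apply: (K_eq _ y2 _ (in_K_chart_fn 4)); rewrite !mpolyC0; ring.
  + by exists 0, 0, 1, 0; apply: (K_eq _ _ _ Ky3); rewrite !mpolyC0 mpolyC1; ring.
- move=> [A [B [C [D Kp]]]] [A' [B' [C' [D' Kq]]]].
  exists (A + A'), (B + B'), (C + C'), (D + D').
  by apply: (K_eq _ _ _ (in_ideal_withD Kp Kq)); rewrite !mpolyCD; ring.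
- move=> [A [B [C [D Kp]]]] [A' [B' [C' [D' Kq]]]].
  exists (A * A' + B * B' + C * C' + D * D'), (A * B' + B * A' + C * D' + D * C'),
    (A * C' + C * A' + B * D' + D * B'), (A * D' + D * A' + B * C' + C * B').
  apply: (K_eq _ (q * (p - lin4 A B C D) + lin4 A B C D * (q - lin4 A' B' C' D')
    + ((B%:MP + D%:MP * y0) * (B'%:MP + D'%:MP * y0)) * (x0 ^+ 2 - 1)
    + ((C * C' + D * D')%:MP + x0 * (C * D' + D * C')%:MP) * (y0 ^+ 2 - 1))).
    by rewrite !mpolyCD !mpolyCM; ring.
  by apply: in_ideal_withD; [apply: in_ideal_withD; [apply: in_ideal_withD|]|];
    apply: in_ideal_withMl.
Qed.

Lemma radical_of_ev_eq0 (two_neq0 : 2%:R != 0 :> k) p : ev p = 0 -> in_radical (SI_eqs k) p.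
Proof.
move=> evp; have [A [B [C [D Kp]]]] := mod_chart_fns p.
have vanish e d : e ^+ 2 = 1 -> d ^+ 2 = 1 -> A + B * e + C * d + D * (e * d) = 0.
  move=> e2 d2; have := meval_scalars_in_ideal_with e2 d2 Kp.
  rewrite rmorphB /= meval_scalars_ker // sub0r => /eqP; rewrite oppr_eq0 => /eqP.
  by rewrite !(rmorphD, rmorphM) /= !mevalC !mevalXU /scalars !inordK.
have [A0 B0 C0 D0] := sign_coefs_eq0 two_neq0 vanish.
move: Kp; rewrite A0 B0 C0 D0 !mpolyC0 !mul0r !addr0 subr0 => Kp.
have ev_ideal q r : ev q = 0 -> ev (r * q) = 0 by move=> evq; rewrite rmorphM /= evq mulr0.
have [e pe] := in_ideal_with_radical ev_ideal ker_sub_sat_chart_fns evp Kp.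
by exists e; apply/in_SI_eqsE.
Qed.

End CommutingPairs.

Theorem proposition3p8 (k : fieldType) (hk : [pchar k]%R =i pred0) :
  k_rational_of_dim (SI_eqs k) 4.
Proof.
exists (SI_param k); split.
  move=> p; split; last exact: ev_eq0_of_radical.
  by apply: radical_of_ev_eq0; rewrite (pcharf0P _).1.
move=> j; exists (('X_j \mPo chart_param k) \mPo chart_coords k), 1.
by rewrite rmorph1 oner_neq0 divr1 ev_chart.
Qed.
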